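(* For every $\delta>0$, the function $\alpha\mapsto L(\alpha;\delta)$ is strictly decreasing on $(0,1)$.
   Context: For $s\ge0$ let $\phi_1(s)=\int_0^{\pi/2}\frac{\sin^2\theta}{(\sin^2\theta+s^2)^{1/2}}d\theta$ (strictly decreasing, $\phi_1(0)=1$, $\phi_1(s)\to0$ as $s\to\infty$, with inverse $\phi_1^{-1}:(0,1]\to[0,\infty)$) and $\phi_2(s)=\int_0^{\pi/2}\frac{2\sin^2\theta+s^2}{(\sin^2\theta+s^2)^{1/2}}d\theta$. For $\alpha\in(0,1)$ and $\delta>0$ define $L(\alpha;\delta)=\frac4\delta\Big(1-\frac{\phi_2^2(\phi_1^{-1}(\alpha))}{4[1+(\phi_1^{-1}(\alpha))^2]}\Big)$. *)

From Stdlib Require Import Reals Lra ClassicalEpsilon.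
Open Scope R_scope.

(* Riemann integral of f over [a,b] (0 if f is not Riemann integrable there);
   RiemannInt does not depend on the integrability proof (RiemannInt_P5). *)
Definition Rint (f : R -> R) (a b : R) : R :=
  epsilon (inhabits 0)
    (fun I => exists pr : Riemann_integrable f a b, RiemannInt pr = I).

Definition phi1 (s : R) : R :=
  Rint (fun t => (sin t)^2 / sqrt ((sin t)^2 + s^2)) 0 (PI/2).

Definition phi2 (s : R) : R :=
  Rint (fun t => (2 * (sin t)^2 + s^2) / sqrt ((sin t)^2 + s^2)) 0 (PI/2).

(* phi_1^{-1} : (0,1] -> [0,oo): the s >= 0 with phi1 s = alpha
   (unique since phi1 is strictly decreasing on [0,oo)). *)
Definition phi1_inv (alpha : R) : R :=
  epsilon (inhabits 0) (fun s => 0 <= s /\ phi1 s = alpha).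

Definition L (alpha delta : R) : R :=
  let s := phi1_inv alpha in
  4 / delta * (1 - (phi2 s)^2 / (4 * (1 + s^2))).

From Stdlib Require Import Reals Lra ClassicalEpsilon.
From Coquelicot Require Import Coquelicot.
Open Scope R_scope.

(* With s = phi1^-1(alpha) and Q(s) = phi2(s)^2 / (1 + s^2) we have
   L(alpha; delta) = (4 - Q(s)) / delta, and phi1 is a decreasing bijection from
   (0, oo) onto (0, 1); so it suffices that Q is strictly decreasing on (0, oo).
   Write r = sqrt(sin^2 t + s^2). Differentiating under the integral sign,
   phi2'(s) = int s^3 / r^3, and (1 + s^2) s^3 / r^3 - s r is the t-derivative of
   s sin t cos t / r, which vanishes at both ends of [0, pi/2]; hence
   (1 + s^2) phi2'(s) = s int r. Since also phi2 = int r + phi1, the int r terms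
   cancel in Q' and Q'(s) = -2 s phi1(s) phi2(s) / (1 + s^2)^2 < 0. *)

Lemma Rint_RInt (f : R -> R) (a b : R) : ex_RInt f a b -> Rint f a b = RInt f a b.
Proof.
  intros Hf. unfold Rint.
  assert (Hex : exists I, exists pr : Riemann_integrable f a b, RiemannInt pr = I).
  { exists (RiemannInt (ex_RInt_Reals_0 _ _ _ Hf)). eexists; reflexivity. }
  destruct (epsilon_spec (inhabits 0) _ Hex) as [pr <-].
  symmetry. apply RInt_Reals.
Qed.

(* Coquelicot states these with [plus], [scal], ... in an abstract module; the casts
   make the equations live in [R], so that [ring] and [lra] see them. *)
Lemma RInt_Rplus (f g : R -> R) (a b : R) : ex_RInt f a b -> ex_RInt g a b ->
  (RInt (fun t => f t + g t) a b : R) = RInt f a b + RInt g a b.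
Proof. exact (RInt_plus f g a b). Qed.

Lemma RInt_Rminus (f g : R -> R) (a b : R) : ex_RInt f a b -> ex_RInt g a b ->
  (RInt (fun t => f t - g t) a b : R) = RInt f a b - RInt g a b.
Proof. exact (RInt_minus f g a b). Qed.

Lemma RInt_Rmult_l (f : R -> R) (a b c : R) : ex_RInt f a b ->
  (RInt (fun t => c * f t) a b : R) = c * RInt f a b.
Proof. exact (RInt_scal f a b c). Qed.

Lemma RInt_Rconst (a b c : R) : (RInt (fun _ => c) a b : R) = (b - a) * c.
Proof. exact (RInt_const a b c). Qed.

Lemma RInt_sin_0_PI2 : (RInt sin 0 (PI / 2) : R) = 1.
Proof.
  apply is_RInt_unique.
  replace 1 with (minus (- cos (PI / 2)) (- cos 0))
    by (rewrite cos_PI2, cos_0; unfold minus, plus, opp; simpl; ring).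
  apply (is_RInt_derive (fun t => - cos t)).
  - intros t _. auto_derive; [easy | ring].
  - intros t _. apply continuous_sin.
Qed.

(* Forms of Coquelicot's continuity lemmas with [Rplus], [Rmult], ... that [apply] can match. *)
Section RealContinuity.
Context {U : UniformSpace}.
Implicit Types (f g : U -> R) (x : U).

Lemma continuous_Rplus f g x :
  continuous f x -> continuous g x -> continuous (fun y => f y + g y) x.
Proof. exact (continuous_plus f g x). Qed.
Lemma continuous_Rmult f g x :
  continuous f x -> continuous g x -> continuous (fun y => f y * g y) x.
Proof. exact (continuous_mult f g x). Qed.
Lemma continuous_Rminus f g x :
  continuous f x -> continuous g x -> continuous (fun y => f y - g y) x.
Proof. exact (continuous_minus f g x). Qed.
Lemma continuous_Ropp f x : continuous f x -> continuous (fun y => - f y) x.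
Proof. exact (continuous_opp f x). Qed.
Lemma continuous_Rdiv f g x :
  continuous f x -> continuous g x -> g x <> 0 -> continuous (fun y => f y / g y) x.
Proof.
  intros Hf Hg Hg0. apply continuous_Rmult; [exact Hf |].
  apply (continuous_comp g Rinv); [exact Hg | now apply continuous_Rinv].
Qed.
Lemma continuous_Rpow f x n : continuous f x -> continuous (fun y => f y ^ n) x.
Proof. intros Hf. induction n; [apply continuous_const | now apply continuous_Rmult]. Qed.
Lemma continuous_sin_comp f x : continuous f x -> continuous (fun y => sin (f y)) x.
Proof. intros Hf. apply (continuous_comp f sin); [exact Hf | apply continuous_sin]. Qed.
Lemma continuous_Rsqrt_comp f x : continuous f x -> continuous (fun y => sqrt (f y)) x.
Proof. intros Hf. apply (continuous_comp f sqrt); [exact Hf | apply continuous_sqrt]. Qed.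
End RealContinuity.

Ltac solve_continuous :=
  repeat match goal with
  | |- continuous (fun _ => _ + _) _ => apply continuous_Rplus
  | |- continuous (fun _ => _ * _) _ => apply continuous_Rmult
  | |- continuous (fun _ => _ / _) _ => apply continuous_Rdiv
  | |- continuous (fun _ => _ - _) _ => apply continuous_Rminus
  | |- continuous (fun _ => - _) _ => apply continuous_Ropp
  | |- continuous (fun _ => _ ^ _) _ => apply continuous_Rpow
  | |- continuous (fun _ => sin _) _ => apply continuous_sin_comp
  | |- continuous (fun _ => sqrt _) _ => apply continuous_Rsqrt_comp
  | |- continuous (fun _ => fst _) _ => apply continuous_fst
  | |- continuous (fun _ => snd _) _ => apply continuous_snd
  | |- continuous sin _ => apply continuous_sin
  | |- continuous fst _ => apply continuous_fst
  | |- continuous snd _ => apply continuous_snd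
  | |- continuous (fun _ => _) _ => apply continuous_const
  end.

Definition continuous2 (h : R -> R -> R) (s t : R) :=
  continuous (fun p : R * R => h (fst p) (snd p)) (s, t).

Lemma continuous_slice (h : R -> R -> R) (s t : R) : continuous2 h s t -> continuous (h s) t.
Proof.
  apply (continuous_comp_2 (fun _ => s) (fun u => u) h);
    [apply continuous_const | apply continuous_id].
Qed.

Lemma is_derive_RInt_param_pos (f df : R -> R -> R) (a b x : R) :
  0 < x ->
  (forall s t, 0 < s -> is_derive (fun z => f z t) s (df s t)) ->
  (forall s t, 0 < s -> continuous (f s) t) ->
  (forall s t, 0 < s -> continuous2 df s t) ->
  is_derive (fun s => RInt (f s) a b) x (RInt (df x) a b).
Proof.
  intros Hx Hd Hf Hdf.
  replace (RInt (df x) a b) with (RInt (fun t => Derive (fun u => f u t) x) a b)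
    by (apply RInt_ext; intros t _; now apply is_derive_unique, Hd).
  apply is_derive_RInt_param.
  - apply (filter_imp (fun y => 0 < y)); [| now apply (open_gt 0)].
    intros y Hy t _. eexists. now apply Hd.
  - intros t _. apply continuity_2d_pt_filterlim.
    change (continuous (fun p : R * R => Derive (fun z => f z (snd p)) (fst p)) (x, t)).
    apply (continuous_ext_loc _ (fun p : R * R => df (fst p) (snd p))); [| now apply Hdf].
    apply (filter_imp (fun p : R * R => 0 < fst p));
      [| apply continuous_fst; now apply (open_gt 0)].
    intros p Hp. symmetry. now apply is_derive_unique, Hd.
  - apply (filter_imp (fun y => 0 < y)); [| now apply (open_gt 0)].
    intros y Hy. apply (ex_RInt_continuous (V := R_CompleteNormedModule)). intros z _. now apply Hf.
Qed.

Definition rad (s t : R) := sqrt (sin t ^ 2 + s ^ 2).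
Definition phi1_integrand (s t : R) := sin t ^ 2 / rad s t.
Definition phi2_integrand (s t : R) := (2 * sin t ^ 2 + s ^ 2) / rad s t.
Definition phi1_integrand_ds (s t : R) := - s * sin t ^ 2 / rad s t ^ 3.
Definition phi2_integrand_ds (s t : R) := s ^ 3 / rad s t ^ 3.

Lemma rad_pos (s t : R) : 0 < s -> 0 < rad s t.
Proof. intros Hs. apply sqrt_lt_R0. nra. Qed.

Lemma rad_sq (s t : R) : rad s t ^ 2 = sin t ^ 2 + s ^ 2.
Proof. unfold rad. rewrite pow2_sqrt; nra. Qed.

Lemma rad_ge (s t : R) : 0 <= s -> s <= rad s t.
Proof. intros Hs. unfold rad. rewrite <- (sqrt_pow2 s Hs) at 1. apply sqrt_le_1_alt. nra. Qed.

(* [auto_derive] unfolds [^ 2]; fold [rad] back and abstract it as an [r] with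
   [r ^ 2 = sin t ^ 2 + s ^ 2] before the final ring computation. *)
Ltac rad_derive s t Hs :=
  unfold phi1_integrand, phi2_integrand, phi1_integrand_ds, phi2_integrand_ds, rad; auto_derive;
  try change (sqrt (sin t * (sin t * 1) + s * (s * 1))) with (rad s t);
  try change (sqrt (sin t ^ 2 + s ^ 2)) with (rad s t);
  pose proof (rad_sq s t); pose proof (rad_pos s t Hs);
  [ repeat split; first [nra | apply Rgt_not_eq; nra]
  | generalize dependent (rad s t); intros r Hr Hr0; field_simplify_eq; [| lra] ].

Lemma is_derive_phi1_integrand (s t : R) : 0 < s ->
  is_derive (fun z => phi1_integrand z t) s (phi1_integrand_ds s t).
Proof. intros Hs. rad_derive s t Hs. ring. Qed.

Lemma is_derive_phi2_integrand (s t : R) : 0 < s ->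
  is_derive (fun z => phi2_integrand z t) s (phi2_integrand_ds s t).
Proof. intros Hs. rad_derive s t Hs. rewrite Hr; ring. Qed.

Lemma is_derive_sin_cos_div_rad (s t : R) : 0 < s ->
  is_derive (fun u => s * sin u * cos u / rad s u) t
    ((1 + s ^ 2) * phi2_integrand_ds s t - s * rad s t).
Proof.
  intros Hs. rad_derive s t Hs.
  pose proof (sin2_cos2 t) as Hc. unfold Rsqr in Hc.
  replace (r ^ 4) with ((r ^ 2) ^ 2) by ring.
  replace (cos t ^ 2) with (1 - sin t ^ 2) by lra.
  rewrite Hr; ring.
Qed.

Ltac solve_continuous_rad :=
  solve_continuous; cbn [fst snd];
  try apply pow_nonzero; apply Rgt_not_eq, rad_pos; assumption.

Lemma continuous_rad (s t : R) : continuous2 rad s t.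
Proof. unfold continuous2, rad. solve_continuous. Qed.

Lemma continuous_phi1_integrand (s t : R) : 0 < s -> continuous2 phi1_integrand s t.
Proof. intros Hs. unfold continuous2, phi1_integrand, rad. solve_continuous_rad. Qed.

Lemma continuous_phi2_integrand (s t : R) : 0 < s -> continuous2 phi2_integrand s t.
Proof. intros Hs. unfold continuous2, phi2_integrand, rad. solve_continuous_rad. Qed.

Lemma continuous_phi1_integrand_ds (s t : R) : 0 < s -> continuous2 phi1_integrand_ds s t.
Proof. intros Hs. unfold continuous2, phi1_integrand_ds, rad. solve_continuous_rad. Qed.

Lemma continuous_phi2_integrand_ds (s t : R) : 0 < s -> continuous2 phi2_integrand_ds s t.
Proof. intros Hs. unfold continuous2, phi2_integrand_ds, rad. solve_continuous_rad. Qed.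

Lemma ex_RInt_slice (h : R -> R -> R) (s a b : R) :
  (forall t, continuous2 h s t) -> ex_RInt (h s) a b.
Proof.
  intros Hh. apply (ex_RInt_continuous (V := R_CompleteNormedModule)).
  intros t _. now apply continuous_slice.
Qed.

Lemma ex_RInt_rad (s a b : R) : ex_RInt (rad s) a b.
Proof. apply ex_RInt_slice. intros t. apply continuous_rad. Qed.

Lemma ex_RInt_phi1_integrand (s a b : R) : 0 < s -> ex_RInt (phi1_integrand s) a b.
Proof. intros Hs. apply ex_RInt_slice. intros t. now apply continuous_phi1_integrand. Qed.

Lemma ex_RInt_phi2_integrand_ds (s a b : R) : 0 < s -> ex_RInt (phi2_integrand_ds s) a b.
Proof. intros Hs. apply ex_RInt_slice. intros t. now apply continuous_phi2_integrand_ds. Qed.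

Lemma phi1_RInt (s : R) : 0 < s -> phi1 s = RInt (phi1_integrand s) 0 (PI / 2).
Proof. intros Hs. now apply Rint_RInt, ex_RInt_phi1_integrand. Qed.

Lemma phi2_RInt (s : R) : 0 < s -> phi2 s = RInt (phi2_integrand s) 0 (PI / 2).
Proof.
  intros Hs. apply Rint_RInt, (ex_RInt_slice phi2_integrand).
  intros t. now apply continuous_phi2_integrand.
Qed.

Lemma is_derive_phi1 (s : R) : 0 < s -> is_derive phi1 s (RInt (phi1_integrand_ds s) 0 (PI / 2)).
Proof.
  intros Hs. apply (is_derive_ext_loc (fun z => RInt (phi1_integrand z) 0 (PI / 2))).
  - apply (filter_imp (fun z => 0 < z)); [| now apply (open_gt 0)].
    intros z Hz. symmetry. now apply phi1_RInt.
  - apply is_derive_RInt_param_pos;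
      auto using is_derive_phi1_integrand, continuous_phi1_integrand_ds.
    intros z t Hz. now apply continuous_slice, continuous_phi1_integrand.
Qed.

Lemma is_derive_phi2 (s : R) : 0 < s -> is_derive phi2 s (RInt (phi2_integrand_ds s) 0 (PI / 2)).
Proof.
  intros Hs. apply (is_derive_ext_loc (fun z => RInt (phi2_integrand z) 0 (PI / 2))).
  - apply (filter_imp (fun z => 0 < z)); [| now apply (open_gt 0)].
    intros z Hz. symmetry. now apply phi2_RInt.
  - apply is_derive_RInt_param_pos;
      auto using is_derive_phi2_integrand, continuous_phi2_integrand_ds.
    intros z t Hz. now apply continuous_slice, continuous_phi2_integrand.
Qed.

Lemma phi2_integrand_eq (s t : R) : 0 < s -> phi2_integrand s t = rad s t + phi1_integrand s t.
Proof.
  intros Hs. pose proof (rad_sq s t). pose proof (rad_pos s t Hs).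
  unfold phi2_integrand, phi1_integrand. field_simplify_eq; lra.
Qed.

Lemma phi2_split (s : R) : 0 < s -> phi2 s = RInt (rad s) 0 (PI / 2) + phi1 s.
Proof.
  intros Hs. rewrite phi2_RInt, phi1_RInt by exact Hs.
  rewrite <- RInt_Rplus by auto using ex_RInt_rad, ex_RInt_phi1_integrand.
  apply RInt_ext. intros t _. now apply phi2_integrand_eq.
Qed.

Lemma RInt_phi2_integrand_ds (s : R) : 0 < s ->
  (1 + s ^ 2) * RInt (phi2_integrand_ds s) 0 (PI / 2) = s * RInt (rad s) 0 (PI / 2).
Proof.
  intros Hs.
  set (F u := s * sin u * cos u / rad s u).
  assert (H : is_RInt (fun t => (1 + s ^ 2) * phi2_integrand_ds s t - s * rad s t) 0 (PI / 2)
                (minus (F (PI / 2)) (F 0))).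
  { apply (is_RInt_derive (V := R_CompleteNormedModule)).
    - intros t _. now apply is_derive_sin_cos_div_rad.
    - intros t _. unfold phi2_integrand_ds, rad. solve_continuous.
      apply pow_nonzero, Rgt_not_eq, rad_pos, Hs. }
  apply (is_RInt_unique (V := R_CompleteNormedModule)) in H.
  rewrite (RInt_Rminus (fun t => (1 + s ^ 2) * phi2_integrand_ds s t) (fun t => s * rad s t)),
    (RInt_Rmult_l (phi2_integrand_ds s)), (RInt_Rmult_l (rad s)) in H;
    auto using ex_RInt_phi2_integrand_ds, ex_RInt_rad, ex_RInt_scal.
  assert (HF : minus (F (PI / 2)) (F 0) = 0).
  { unfold F. rewrite cos_PI2, sin_0, !Rmult_0_r, !Rmult_0_l, !Rdiv_0_l.
    unfold minus, plus, opp; simpl; ring. }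
  lra.
Qed.

Lemma PI2_pos : 0 < PI / 2.
Proof. pose proof PI_RGT_0. lra. Qed.

Lemma phi1_0 : phi1 0 = 1.
Proof.
  assert (Hsin : forall t, 0 < t < PI / 2 ->
                   sin t = sin t ^ 2 / sqrt (sin t ^ 2 + 0 ^ 2)).
  { intros t Ht. pose proof PI_RGT_0. assert (0 < sin t) by (apply sin_gt_0; lra).
    replace (sin t ^ 2 + 0 ^ 2) with (sin t ^ 2) by ring. rewrite sqrt_pow2 by lra. field. lra. }
  pose proof PI2_pos.
  unfold phi1. rewrite Rint_RInt, <- RInt_sin_0_PI2.
  - symmetry. apply RInt_ext. intros t.
    rewrite Rmin_left, Rmax_right by lra. apply Hsin.
  - apply (ex_RInt_ext sin). 
    + intros t. rewrite Rmin_left, Rmax_right by lra. apply Hsin.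
    + apply (ex_RInt_continuous (V := R_CompleteNormedModule)). intros t _. apply continuous_sin.
Qed.

Lemma phi1_pos (s : R) : 0 < s -> 0 < phi1 s.
Proof.
  intros Hs. rewrite phi1_RInt by exact Hs. apply RInt_gt_0; [exact PI2_pos | |].
  - intros t Ht. pose proof PI_RGT_0. assert (0 < sin t) by (apply sin_gt_0; lra).
    unfold phi1_integrand. apply Rdiv_lt_0_compat; [nra | now apply rad_pos].
  - intros t _. now apply continuous_slice, continuous_phi1_integrand.
Qed.

Lemma phi2_pos (s : R) : 0 < s -> 0 < phi2 s.
Proof.
  intros Hs. rewrite phi2_RInt by exact Hs. apply RInt_gt_0; [exact PI2_pos | |].
  - intros t _. unfold phi2_integrand. apply Rdiv_lt_0_compat; [nra | now apply rad_pos].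
  - intros t _. now apply continuous_slice, continuous_phi2_integrand.
Qed.

Lemma phi1_antitone (x y : R) : 0 < x -> x <= y -> phi1 y <= phi1 x.
Proof.
  intros Hx Hxy. rewrite !phi1_RInt by lra.
  apply RInt_le; [pose proof PI2_pos; lra | apply ex_RInt_phi1_integrand; lra
                 | apply ex_RInt_phi1_integrand; lra |].
  intros t _. unfold phi1_integrand, rad. apply Rmult_le_compat_l; [nra |].
  apply Rinv_le_contravar; [apply sqrt_lt_R0; nra | apply sqrt_le_1_alt; nra].
Qed.

Lemma phi1_lower_bound (s : R) : 0 < s -> 1 - s * (PI / 2) <= phi1 s.
Proof.
  intros Hs. pose proof PI2_pos.
  assert (Hsin : ex_RInt sin 0 (PI / 2)).
  { apply (ex_RInt_continuous (V := R_CompleteNormedModule)). intros t _. apply continuous_sin. }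
  assert (Hconst : ex_RInt (fun _ => s) 0 (PI / 2)) by apply ex_RInt_const.
  replace (1 - s * (PI / 2)) with (RInt (fun t => sin t - s) 0 (PI / 2) : R)
    by (rewrite (RInt_Rminus sin (fun _ => s)) by assumption;
        rewrite RInt_sin_0_PI2, RInt_Rconst; ring).
  rewrite phi1_RInt by exact Hs.
  apply RInt_le;
    [lra | now apply (ex_RInt_minus (V := R_NormedModule)) | now apply ex_RInt_phi1_integrand |].
  intros t Ht. pose proof (rad_sq s t). pose proof (rad_pos s t Hs).
  assert (0 <= sin t) by (apply sin_ge_0; pose proof PI_RGT_0; lra).
  assert (Hrs : rad s t <= sin t + s) by nra.
  unfold phi1_integrand. apply (Rmult_le_reg_r (rad s t)); [lra |].
  unfold Rdiv. rewrite Rmult_assoc, Rinv_l by lra. nra.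
Qed.

Lemma phi1_upper_bound (s : R) : 0 < s -> phi1 s <= (PI / 2) / s.
Proof.
  intros Hs. pose proof PI2_pos.
  replace ((PI / 2) / s) with (RInt (fun _ => / s) 0 (PI / 2) : R)
    by (rewrite RInt_Rconst; field; lra).
  rewrite phi1_RInt by exact Hs.
  apply RInt_le; [lra | now apply ex_RInt_phi1_integrand | apply ex_RInt_const |].
  intros t _. pose proof (rad_ge s t (Rlt_le _ _ Hs)). pose proof (rad_pos s t Hs).
  pose proof (sin2_cos2 t) as Hc. unfold Rsqr in Hc.
  unfold phi1_integrand. apply (Rmult_le_reg_r (s * rad s t)); [nra |].
  unfold Rdiv. replace (sin t ^ 2 * / rad s t * (s * rad s t)) with (s * sin t ^ 2) by (field; lra).
  replace (/ s * (s * rad s t)) with (rad s t) by (field; lra).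
  nra.
Qed.

Lemma continuity_pt_phi1 (s : R) : 0 < s -> continuity_pt phi1 s.
Proof.
  intros Hs. apply continuity_pt_filterlim, (ex_derive_continuous (V := R_NormedModule)).
  eexists. now apply is_derive_phi1.
Qed.

Lemma phi1_surjective (alpha : R) : 0 < alpha < 1 -> exists s, 0 < s /\ phi1 s = alpha.
Proof.
  intros Halpha. pose proof PI_4. pose proof PI_RGT_0.
  set (lo := (1 - alpha) / 4). set (hi := 4 / alpha).
  assert (Hlo : 0 < lo) by (unfold lo; lra).
  assert (Hhi : 1 < hi) by (unfold hi; apply (Rmult_lt_reg_r alpha); [lra | field_simplify; lra]).
  assert (H1 : alpha < phi1 lo).
  { pose proof (phi1_lower_bound lo Hlo). assert (lo * (PI / 2) <= 2 * lo) by nra.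
    unfold lo in *. lra. }
  assert (H2 : phi1 hi < alpha).
  { pose proof (phi1_upper_bound hi ltac:(lra)).
    assert (PI / 2 / hi <= alpha / 2).
    { unfold hi. apply (Rmult_le_reg_r (4 / alpha)); [apply Rdiv_lt_0_compat; lra |].
      field_simplify; lra. }
    lra. }
  destruct (Ranalysis5.IVT_interv (fun s => alpha - phi1 s) lo hi) as [z [Hz Hz0]];
    [| unfold lo in *; lra | simpl; lra | simpl; lra |].
  - intros s Hs. apply continuity_pt_minus;
      [apply continuity_pt_const; intros ? ?; reflexivity | apply continuity_pt_phi1; lra].
  - exists z. simpl in Hz0. split; lra.
Qed.

Lemma phi1_inv_spec (alpha : R) : 0 < alpha < 1 ->
  0 < phi1_inv alpha /\ phi1 (phi1_inv alpha) = alpha.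
Proof.
  intros Halpha. destruct (phi1_surjective alpha Halpha) as [s [Hs Hphi]].
  assert (Hex : exists s, 0 <= s /\ phi1 s = alpha) by (exists s; split; lra).
  destruct (epsilon_spec (inhabits 0) _ Hex) as [[Hpos | Hzero] Heq];
    fold (phi1_inv alpha) in *; [easy |].
  rewrite <- Hzero, phi1_0 in Heq. lra.
Qed.

Definition phi2_ratio (s : R) := phi2 s ^ 2 / (1 + s ^ 2).

Lemma is_derive_phi2_ratio (s : R) : 0 < s ->
  is_derive phi2_ratio s (- 2 * s * phi1 s * phi2 s / (1 + s ^ 2) ^ 2).
Proof.
  intros Hs. unfold phi2_ratio.
  replace (- 2 * s * phi1 s * phi2 s / (1 + s ^ 2) ^ 2) with
    ((INR 2 * RInt (phi2_integrand_ds s) 0 (PI / 2) * phi2 s ^ Nat.pred 2 * (1 + s ^ 2)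
      - phi2 s ^ 2 * (2 * s)) / (1 + s ^ 2) ^ 2).
  - apply (is_derive_div (fun z => phi2 z ^ 2) (fun z => 1 + z ^ 2)); [| | nra].
    + now apply is_derive_pow, is_derive_phi2.
    + auto_derive; [easy | ring].
  - pose proof (RInt_phi2_integrand_ds s Hs) as Hd. rewrite (phi2_split s Hs).
    set (D := RInt (phi2_integrand_ds s) 0 (PI / 2)) in *.
    set (I := RInt (rad s) 0 (PI / 2)) in *.
    simpl INR; simpl Nat.pred.
    replace ((1 + 1) * D * (I + phi1 s) ^ 1 * (1 + s ^ 2))
      with (2 * (I + phi1 s) * ((1 + s ^ 2) * D)) by ring.
    rewrite Hd. field. nra.
Qed.

Lemma phi2_ratio_decreasing (x y : R) : 0 < x -> x < y -> phi2_ratio y < phi2_ratio x.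
Proof.
  intros Hx Hxy.
  enough (H : - phi2_ratio x < - phi2_ratio y) by lra.
  apply (incr_function (fun s => - phi2_ratio s) 0 p_infty
           (fun s => - (- 2 * s * phi1 s * phi2 s / (1 + s ^ 2) ^ 2)));
    [| | exact Hx | exact Hxy | easy].
  - intros s Hs _. apply (is_derive_opp (V := R_NormedModule) phi2_ratio).
    now apply is_derive_phi2_ratio.
  - intros s Hs _. simpl in Hs. pose proof (phi1_pos s Hs). pose proof (phi2_pos s Hs).
    replace (- (- 2 * s * phi1 s * phi2 s / (1 + s ^ 2) ^ 2))
      with (2 * s * phi1 s * phi2 s / (1 + s ^ 2) ^ 2) by (field; nra).
    apply Rdiv_lt_0_compat; [repeat apply Rmult_lt_0_compat; lra | apply pow_lt; nra].
Qed.

Lemma L_phi2_ratio (alpha delta : R) : delta <> 0 ->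
  L alpha delta = (4 - phi2_ratio (phi1_inv alpha)) / delta.
Proof.
  intros Hd. unfold L, phi2_ratio. field.
  split; [pose proof (pow2_ge_0 (phi1_inv alpha)); lra | exact Hd].
Qed.

Theorem mainTheorem14 : forall delta : R, 0 < delta ->
  forall a b : R, 0 < a -> a < b -> b < 1 -> L b delta < L a delta.
Proof.
  intros delta Hdelta a b Ha Hab Hb.
  destruct (phi1_inv_spec a ltac:(lra)) as [Hsa Hpa].
  destruct (phi1_inv_spec b ltac:(lra)) as [Hsb Hpb].
  assert (Hs : phi1_inv b < phi1_inv a).
  { apply Rnot_le_lt. intros Hle. pose proof (phi1_antitone _ _ Hsa Hle). lra. }
  rewrite !L_phi2_ratio by lra.
  apply Rmult_lt_compat_r; [now apply Rinv_0_lt_compat |].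
  pose proof (phi2_ratio_decreasing _ _ Hsb Hs). lra.
Qed.
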